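(* Let $\mu$ be an $E_2$-invariant Borel probability measure on $\mathbb{T}$ and let $F$ be a $p$-flower for $E_2$ (with $p\ge 3$) such that $\mathrm{supp}(\mu)\subset F$. If $\mu(P_i)=0$ for some petal $P_i$ of $F$, then there is a $(p-2)$-flower $\tilde F$ for $E_2$ with $\mathrm{supp}(\mu)\subset\tilde F$ and $P_i\not\subset\tilde F$.
   Context: $\mathbb{T}=\mathbb{R}/\mathbb{Z}$, $E_2(x)=2x\bmod1$. A preimage selector for $E_2$ is a map $\eta:\mathbb{T}\to\mathbb{T}$ with $E_2(\eta(x))=x$ for all $x$, having finitely many discontinuities, each a jump discontinuity (both one-sided limits exist, differ, and one equals the value). A $p$-flower is $\overline{\eta(\mathbb{T})}$ for a preimage selector $\eta$ with exactly $p$ discontinuities; its $p$ connected components (closed intervals) are its petals. *)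

(* The circle T = R/Z is represented by the
   representatives in [0,1) ("onT"), with the quotient metric dT. *)
From mathcomp Require Import all_boot all_order all_algebra.
From mathcomp Require Import all_classical all_reals all_analysis.
Set Implicit Arguments. Unset Strict Implicit. Unset Printing Implicit Defensive.
Import Order.TTheory GRing.Theory Num.Theory.
Local Open Scope classical_set_scope.
Local Open Scope ring_scope.

Section Circle.
Variable R : realType.

Definition frac (x : R) : R := x - (Num.floor x)%:~R.

Definition onT (x : R) : Prop := 0 <= x < 1.

Definition dT (x y : R) : R := Num.min (frac (x - y)) (1 - frac (x - y)).

Definition E2 (x : R) : R := frac (2 * x).

(* open subsets of T (only the trace on [0,1) matters) *)
Definition openT (U : set R) : Prop :=
  forall x, onT x -> U x ->
    exists2 e : R, 0 < e & forall y, onT y -> dT x y < e -> U y.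

Definition connectedT (S : set R) : Prop :=
  forall U V : set R, openT U -> openT V ->
    S `<=` U `|` V -> S `&` U `&` V = set0 ->
    S `&` U = set0 \/ S `&` V = set0.

Definition closureT (A : set R) : set R :=
  [set z | onT z /\ forall e : R, 0 < e -> exists2 x, A x & dT z x < e].

Definition preimage_selector (eta : R -> R) : Prop :=
  forall x, onT x -> onT (eta x) /\ E2 (eta x) = x.

Definition contT (eta : R -> R) (x : R) : Prop :=
  forall e : R, 0 < e -> exists2 d : R, 0 < d &
    forall y, onT y -> dT x y < d -> dT (eta x) (eta y) < e.

Definition left_limT (eta : R -> R) (x L : R) : Prop :=
  forall e : R, 0 < e -> exists2 d : R, 0 < d &
    forall t : R, 0 < t -> t < d -> dT (eta (frac (x - t))) L < e.
Definition right_limT (eta : R -> R) (x L : R) : Prop :=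
  forall e : R, 0 < e -> exists2 d : R, 0 < d &
    forall t : R, 0 < t -> t < d -> dT (eta (frac (x + t))) L < e.

Definition jumpT (eta : R -> R) (x : R) : Prop :=
  exists L Rl : R, [/\ onT L /\ onT Rl, left_limT eta x L, right_limT eta x Rl,
    L <> Rl & (eta x = L \/ eta x = Rl)].

Definition discT (eta : R -> R) : set R := [set x | onT x /\ ~ contT eta x].

Definition selector_with (p : nat) (eta : R -> R) : Prop :=
  [/\ preimage_selector eta,
      (exists s : seq R, [/\ uniq s, size s = p &
                            discT eta = [set x | x \in s]]) &
      forall x, discT eta x -> jumpT eta x].

Definition flower (p : nat) (F : set R) : Prop :=
  exists eta : R -> R, selector_with p eta /\
    F = closureT [set eta x | x in onT].

Definition petal (F P : set R) : Prop :=
  [/\ P `<=` F, P !=set0, connectedT P &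
      forall Q : set R, connectedT Q -> P `<=` Q -> Q `<=` F -> Q = P].

Definition suppT (mu : set R -> \bar R) : set R :=
  [set x | onT x /\ forall e : R, 0 < e ->
     (0 < mu [set y | onT y /\ (dT x y < e)%R])%E].

End Circle.

(* On each gap (d, d') between consecutive discontinuities a preimage selector
   is a continuous branch of the inverse of E2, hence an isometry at half speed
   onto an arc; the closures of these arcs are the petals, and at every
   discontinuity the two one-sided limits are the two antipodal preimages of the
   point.  If the petal over (d, d') is mu-null, switch to the other branch
   (add 1/2) on that petal only: the jumps at d and d' disappear and no new ones
   appear, so the new selector has p - 2 discontinuities.  Its flower is the old
   one with that petal replaced by its antipodal copy, so it misses the start of
   the petal; and it still contains supp mu, since near any point of a null
   petal the old flower is that petal alone, a null set. *)

From Pilot Require Import Defs.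
From mathcomp Require Import all_boot all_order all_algebra.
From mathcomp Require Import all_classical all_reals all_analysis.
From mathcomp Require Import lra zify measurable_realfun.
Import Order.TTheory GRing.Theory Num.Theory.
Import numFieldNormedType.Exports.
Local Open Scope classical_set_scope.
Local Open Scope ring_scope.
Set Implicit Arguments. Unset Strict Implicit. Unset Printing Implicit Defensive.
(* MathComp already uses the names [frac], [openT] and [closureT]. *)
Local Notation frac := Defs.frac.
Local Notation openT := Defs.openT.
Local Notation closureT := Defs.closureT.

Section CircleT.
Variable R : realType.
Implicit Types x y z a : R.

Lemma fracP x : 0 <= frac x < 1.
Proof.
rewrite /frac; have := floor_le x; have := floorD1_gt x.
rewrite intrD => ? ?; apply/andP; split; lra.
Qed.

Lemma frac_onT x : onT (frac x).
Proof. exact: fracP. Qed.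

Lemma frac_def x y (n : int) : x = y + n%:~R -> onT y -> frac x = y.
Proof.
move=> -> /andP[y0 y1]; rewrite /frac.
suff -> : Num.floor (y + n%:~R) = n by lra.
by apply: floor_def; rewrite intrD; apply/andP; split; lra.
Qed.

Lemma frac_decomp x : exists n : int, x = frac x + n%:~R.
Proof. by exists (Num.floor x); rewrite /frac; lra. Qed.

Lemma frac_congrz x y (n : int) : x = y + n%:~R -> frac x = frac y.
Proof.
move=> ->; have [m ym] := frac_decomp y.
by apply: (frac_def (n := n + m)); [rewrite intrD {1}ym; lra | exact: frac_onT].
Qed.

Lemma frac_eqz x y : frac x = frac y -> exists n : int, x = y + n%:~R.
Proof.
move=> xy; have [n xn] := frac_decomp x; have [m ym] := frac_decomp y.
by exists (n - m); rewrite intrB xn ym xy; lra.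
Qed.

Lemma frac_id x : onT x -> frac x = x.
Proof. by apply: (frac_def (n := 0)); rewrite addr0. Qed.

Lemma frac0 : frac 0 = 0 :> R.
Proof. by apply: frac_id; rewrite /onT lexx ltr01. Qed.

Lemma fracNhalf : frac (- 2^-1) = 2^-1 :> R.
Proof. by apply: (frac_def (n := -1)); [lra | apply/andP; split; lra]. Qed.

Lemma frac_addl x y : frac (frac x + y) = frac (x + y).
Proof.
have [n xn] := frac_decomp x; apply: (frac_congrz (n := - n)).
by rewrite {2}xn intrN; lra.
Qed.

Lemma frac_addr x y : frac (x + frac y) = frac (x + y).
Proof. by rewrite addrC frac_addl addrC. Qed.

Lemma frac_subl x y : frac (frac x - y) = frac (x - y).
Proof. exact: frac_addl. Qed.

Lemma frac_subr x y : frac (x - frac y) = frac (x - y).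
Proof.
have [n yn] := frac_decomp y; apply: (frac_congrz (n := n)).
by rewrite {2}yn; lra.
Qed.

Lemma frac_add_subK a t : onT t -> frac (frac (a + t) - a) = t.
Proof. by move=> t01; rewrite frac_subl addrC addKr frac_id. Qed.

Lemma frac_sub_addK a y : onT y -> frac (a + frac (y - a)) = y.
Proof. by move=> y01; rewrite frac_addr addrC subrK frac_id. Qed.

Lemma frac_sub_shift z a t : 0 <= frac (z - a) + t < 1 ->
  frac (frac (z + t) - a) = frac (z - a) + t.
Proof.
move=> ht; rewrite frac_subl; have [k zk] := frac_decomp (z - a).
by apply: (frac_def (n := k)) => //; lra.
Qed.

Lemma frac_chasles a b z :
  frac (z - a) = frac (z - b) + frac (b - a) \/
  frac (z - a) = frac (z - b) + frac (b - a) - 1.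
Proof.
have /andP[? ?] := fracP (z - b); have /andP[? ?] := fracP (b - a).
set k := Num.floor (z - b) + Num.floor (b - a).
have [lt1|ge1] := ltP (frac (z - b) + frac (b - a)) 1.
  left; apply: (frac_def (n := k)); first by rewrite intrD /frac; lra.
  by apply/andP; split; lra.
right; apply: (frac_def (n := k + 1)); first by rewrite !intrD /frac; lra.
by apply/andP; split; lra.
Qed.

Lemma frac_sub_eq0 x y : onT x -> onT y -> frac (x - y) = 0 -> x = y.
Proof.
move=> /andP[? ?] /andP[? ?] xy; have [n xyn] := frac_decomp (x - y).
rewrite xy add0r in xyn.
have : (-1 < n)%R /\ (n < 1)%R by rewrite -!(ltr_int R); split; lra.
move=> n01; have n0 : n = 0 by lia.
by move: xyn; rewrite n0; lra.
Qed.

Lemma frac_sub_gt0 x y : onT x -> onT y -> x <> y -> 0 < frac (x - y).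
Proof.
move=> x01 y01 xy; have /andP[ge0 _] := fracP (x - y).
by rewrite lt_neqAle ge0 andbT eq_sym; apply/eqP => /(frac_sub_eq0 x01 y01).
Qed.

Lemma dT_le_normz x y (n : int) : dT x y <= `|x - y - n%:~R|.
Proof.
rewrite /dT /frac; set m := Num.floor (x - y).
have := floor_le (x - y); have := floorD1_gt (x - y); rewrite -/m intrD => ? ?.
have [nm|mn] := lerP n m.
  have : n%:~R <= m%:~R :> R by rewrite ler_int.
  by move=> ?; rewrite ge_min (le_trans _ (ler_norm _)) //; lra.
have : (m + 1)%:~R <= n%:~R :> R by rewrite ler_int; lia.
rewrite intrD ge_min => ?; apply/orP; right.
by rewrite ler_normr; apply/orP; right; lra.
Qed.

Lemma dT_normz x y : exists n : int, dT x y = `|x - y - n%:~R|.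
Proof.
rewrite /dT /frac; set m := Num.floor (x - y).
have := floor_le (x - y); have := floorD1_gt (x - y); rewrite -/m intrD => ? ?.
have [le|gt] := leP (x - y - m%:~R) (1 - (x - y - m%:~R)).
  by exists m; rewrite ger0_norm //; lra.
by exists (m + 1); rewrite intrD ler0_norm; lra.
Qed.

Lemma dT_le_norm x y : dT x y <= `|x - y|.
Proof. by have := dT_le_normz x y 0; rewrite subr0. Qed.

Lemma dT_ge0 x y : 0 <= dT x y.
Proof. by have [n ->] := dT_normz x y. Qed.

Lemma dTxx x : dT x x = 0.
Proof.
by apply/eqP; rewrite eq_le dT_ge0 andbT (le_trans (dT_le_norm x x)) // subrr normr0.
Qed.

Lemma dTC x y : dT y x = dT x y.
Proof.
suff le (u v : R) : dT v u <= dT u v by apply/eqP; rewrite eq_le !le.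
have [n ->] := dT_normz u v; apply: le_trans (dT_le_normz _ _ (- n)) _.
by rewrite intrN -normrN le_eqVlt; apply/orP; left; apply/eqP; congr `|_|; lra.
Qed.

Lemma dT_triangle x y z : dT x z <= dT x y + dT y z.
Proof.
have [n1 ->] := dT_normz x y; have [n2 ->] := dT_normz y z.
apply: le_trans (dT_le_normz _ _ (n1 + n2)) (le_trans _ (ler_normD _ _)).
by rewrite intrD le_eqVlt; apply/orP; left; apply/eqP; congr `|_|; lra.
Qed.

Lemma dT_eq0 x y : onT x -> onT y -> dT x y = 0 -> x = y.
Proof.
move=> x01 y01 xy; apply: frac_sub_eq0 => //; move: xy.
by have /andP[? ?] := fracP (x - y); rewrite /dT /Num.min; case: ifP => _; lra.
Qed.

Lemma dT_small_eq x y : onT x -> onT y -> (forall e, 0 < e -> dT x y < e) -> x = y.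
Proof.
move=> x01 y01 small; apply: dT_eq0 => //; apply/eqP; rewrite eq_le dT_ge0 andbT.
by rewrite leNgt; apply/negP => /small; rewrite ltxx.
Qed.

Lemma dT_fracl x y : dT (frac x) y = dT x y.
Proof. by rewrite /dT frac_subl. Qed.

Lemma dT_fracr x y : dT x (frac y) = dT x y.
Proof. by rewrite /dT frac_subr. Qed.

Lemma dT_addr x y a : dT (x + a) (y + a) = dT x y.
Proof. by rewrite /dT opprD addrACA subrr addr0. Qed.

Lemma dT_frac_add a t t' : dT (frac (a + t)) (frac (a + t')) <= `|t - t'|.
Proof.
by rewrite dT_fracl dT_fracr (le_trans (dT_le_norm _ _)) // opprD addrACA subrr add0r.
Qed.

Lemma dT_cases x y : onT y -> y = frac (x + dT x y) \/ y = frac (x - dT x y).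
Proof.
move=> y01; have [n ->] := dT_normz x y.
have [ge0|lt0] := leP 0 (x - y - n%:~R).
  by right; rewrite ger0_norm //; symmetry; apply: (frac_def (n := n)) => //; lra.
by left; rewrite ltr0_norm //; symmetry; apply: (frac_def (n := n)) => //; lra.
Qed.

Lemma frac_sub_dT a y y' : dT y y' < frac (y - a) -> dT y y' < 1 - frac (y - a) ->
  `|frac (y' - a) - frac (y - a)| = dT y y'.
Proof.
have [n ->] := dT_normz y y'; set w := y - y' - n%:~R.
have [k yk] := frac_decomp (y - a).
rewrite !ltr_norml => /andP[? ?] /andP[? ?].
suff -> : frac (y' - a) = frac (y - a) - w by rewrite addrAC subrr add0r normrN.
by apply: (frac_def (n := k - n)); [rewrite intrB /w; lra | apply/andP; split; lra].
Qed.

Definition flip y : R := frac (y + 2^-1).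

Lemma flip_onT y : onT (flip y).
Proof. exact: frac_onT. Qed.

Lemma dT_flip x y : dT (flip x) (flip y) = dT x y.
Proof. by rewrite /flip dT_fracl dT_fracr dT_addr. Qed.

Lemma flipK y : onT y -> flip (flip y) = y.
Proof. by move=> y01; rewrite /flip frac_addl; apply: (frac_def (n := 1)) => //; lra. Qed.

Lemma dT_flipr y : dT y (flip y) = 2^-1.
Proof.
rewrite /flip dT_fracr /dT opprD addrA subrr add0r fracNhalf.
by rewrite /Num.min; case: ifP => _; lra.
Qed.

Lemma flip_neq y : flip y <> y.
Proof. by move=> fy; have := dT_flipr y; rewrite fy dTxx; lra. Qed.

Lemma E2_frac x : E2 (frac x) = frac (2 * x).
Proof.
have [n xn] := frac_decomp x; apply: (frac_congrz (n := - (2 * n))).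
by rewrite {2}xn intrN intrM; lra.
Qed.

Lemma E2_flip y : E2 (flip y) = E2 y.
Proof. by rewrite /flip E2_frac; apply: (frac_congrz (n := 1)); lra. Qed.

Lemma E2_fiber u v : onT u -> onT v -> E2 u = E2 v -> u = v \/ u = flip v.
Proof.
move=> /andP[? ?] /andP[? ?]; rewrite /E2 /frac => uv.
set n := Num.floor (2 * u) - Num.floor (2 * v).
have uvn : 2 * u - 2 * v = n%:~R by rewrite /n intrB; lra.
have : (-2 < n)%R /\ (n < 2)%R by rewrite -!(ltr_int R); split; lra.
move=> n2; have [n0|[n1|n1]] : n = 0 \/ n = 1 \/ n = -1 by lia.
- by left; move: uvn; rewrite n0; lra.
- right; symmetry; apply: (frac_def (n := 0)); last by apply/andP; split; lra.
  by move: uvn; rewrite n1; lra.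
- right; symmetry; apply: (frac_def (n := 1)); last by apply/andP; split; lra.
  by move: uvn; rewrite n1; lra.
Qed.

Lemma fiber_choice_stable a b w v : dT w v < 8^-1 -> dT a b < 4^-1 ->
  a = w \/ a = flip w -> b = v \/ b = flip v -> (a == w) = (b == v).
Proof.
move=> wv ab aw bv; case: aw ab => -> ab; case: bv ab => -> ab;
rewrite ?eqxx ?(negbTE (introN eqP (@flip_neq _))) //.
- by have := dT_flipr v; have := dT_triangle v w (flip v); rewrite (dTC w v); lra.
- by have := dT_flipr w; have := dT_triangle w v (flip w); rewrite (dTC (flip w) v); lra.
Qed.

Lemma exists_pos_below a b z : 0 < a -> 0 < b -> 0 < z ->
  exists t : R, [/\ 0 < t, t < a, t < b & t < z].
Proof.
move=> a0 b0 z0; exists (Num.min a (Num.min b z) / 2).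
by case: (ltP a (Num.min b z)); case: (ltP b z) => *; split; lra.
Qed.

Lemma common_shift u v l m : 0 < l -> 0 < m -> 0 <= u <= l -> 0 <= v <= m ->
  [\/ exists t : R, 0 < u + t < l /\ 0 < v + t < m, u = 0 /\ v = m | u = l /\ v = 0].
Proof.
move=> l0 m0 /andP[u0 ul] /andP[v0 vm].
have [vu|?] := ltP (v - u) m; last by constructor 2; split; lra.
have [uv|?] := ltP (u - v) l; last by constructor 3; split; lra.
constructor 1; exists ((Num.max (- u) (- v) + Num.min (l - u) (m - v)) / 2).
by case: (ltP (- u) (- v)); case: (ltP (l - u) (m - v)) => *;
  split; apply/andP; split; lra.
Qed.

Lemma near_frac_sub_gt a m y : 0 <= m -> m < frac (y - a) ->
  exists2 r : R, 0 < r & forall y', dT y y' < r -> m < frac (y' - a).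
Proof.
move=> m0 my; have /andP[? ?] := fracP (y - a).
exists (Num.min (frac (y - a) - m) (1 - frac (y - a))).
  by rewrite lt_min; apply/andP; split; lra.
move=> y'; rewrite lt_min => /andP[? ?].
have : `|frac (y' - a) - frac (y - a)| <= dT y y' by rewrite frac_sub_dT //; lra.
by move/ler_normlP => [? ?]; lra.
Qed.

Lemma near_frac_sub_in a m y : m <= 1 -> 0 < frac (y - a) < m ->
  exists2 r : R, 0 < r & forall y', dT y y' < r -> 0 < frac (y' - a) < m.
Proof.
move=> m1 /andP[? ?]; have /andP[? ?] := fracP (y - a).
exists (Num.min (frac (y - a)) (m - frac (y - a))).
  by rewrite lt_min; apply/andP; split; lra.
move=> y'; rewrite lt_min => /andP[? ?].
have : `|frac (y' - a) - frac (y - a)| <= dT y y' by rewrite frac_sub_dT //; lra.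
by move/ler_normlP => [? ?]; apply/andP; split; lra.
Qed.

Lemma near_all_seq (T : eqType) y (l : seq T) (P : T -> R -> Prop) :
  (forall d, d \in l -> exists2 r : R, 0 < r & forall y', onT y' -> dT y y' < r -> P d y') ->
  exists2 r : R, 0 < r & forall y', onT y' -> dT y y' < r -> forall d, d \in l -> P d y'.
Proof.
elim: l => [|a l IH] near; first by exists 1 => //; lra.
have [ra ra0 Pa] := near a (mem_head _ _).
have [rl rl0 Pl] := IH (fun d dl => near d (mem_behead (s := a :: l) dl)).
exists (Num.min ra rl) => [|y' y'01]; first by rewrite lt_min ra0 rl0.
by rewrite lt_min => /andP[? ?] d /predU1P[->|]; [exact: Pa | exact: Pl].
Qed.

Lemma seq_argmin (T : eqType) (f : T -> R) (l : seq T) (P : pred T) :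
  has P l -> exists x : T, [/\ x \in l, P x & forall y : T, y \in l -> P y -> f x <= f y].
Proof.
elim: l => //= a l IH.
have [Pa _|nPa /IH [x [xl Px xmin]]] := boolP (P a); last first.
  exists x; split; [by rewrite inE xl orbT | by [] |].
  by move=> y /predU1P[-> Py|]; [by rewrite Py in nPa | exact: xmin].
have [/IH [x [xl Px xmin]]|/hasPn noP] := boolP (has P l); last first.
  exists a; split; rewrite ?mem_head //.
  by move=> y /predU1P[-> //|/noP /negP].
have [ax|xa] := leP (f a) (f x).
  exists a; split; rewrite ?mem_head //.
  by move=> y /predU1P[-> //|yl Py]; exact: le_trans ax (xmin _ yl Py).
exists x; split; [by rewrite inE xl orbT | by [] |].
by move=> y /predU1P[-> _|]; [exact: ltW | exact: xmin].
Qed.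

End CircleT.

Lemma segment_locally_constant (R : realType) (f : R -> bool) (a b : R) : a <= b ->
  (forall t, a <= t <= b -> exists2 d : R, 0 < d &
     forall u, a <= u <= b -> `|u - t| < d -> f u = f t) ->
  forall t, a <= t <= b -> f t = f a.
Proof.
move=> ab loc.
pose stable (c : bool) := [set q : R * R | [/\ a <= q.1 <= b, f q.1 = c, 0 < q.2 &
   forall u, a <= u <= b -> `|u - q.1| < q.2 -> f u = f q.1]].
pose C (c : bool) := \bigcup_(q in stable c) ball q.1 q.2.
have C_open c : open (C c) by apply: bigcup_open => q _; exact: ball_open.
have CE c u : a <= u <= b -> C c u <-> f u = c.
  move=> abu; split.
    by case=> q [? <- ? fq]; rewrite -ball_normE /ball_ /= => ?; apply: fq; rewrite // distrC.
  move=> fu; have [d d0 fd] := loc u abu; exists (u, d) => //=.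
  by rewrite -ball_normE /ball_ /= subrr normr0.
have itvE u : `[a, b]%classic u <-> a <= u <= b.
  by rewrite /= in_itv /=; split => /andP[-> ->].
have : [set u | a <= u <= b /\ f u = f a] = `[a, b]%classic.
  apply: segment_connected; first by exists a; rewrite /= lexx ab.
    exists (C (f a)) => //; apply/seteqP; split => u.
      by move=> [abu fu]; split; [apply/itvE | apply/CE].
    by move=> [/itvE abu Cu]; split => //; apply/CE.
  exists (~` C (~~ f a)); first exact: open_closedC.
  apply/seteqP; split => u.
    move=> [abu fu]; split; first exact/itvE.
    by move/(CE _ _ abu); rewrite fu; case: (f a).
  move=> [/itvE abu nC]; split => //; apply: contrapT => fu; apply: nC.
  by apply/CE => //; move: fu; case: (f u); case: (f a).
move=> same t abt; have : `[a, b]%classic t by exact/itvE.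
by rewrite -same => -[].
Qed.

Section SelectorLift.
Variables (R : realType) (eta : R -> R).
Hypothesis eta_sel : preimage_selector eta.

Lemma eta_onT x : onT x -> onT (eta x).
Proof. by case/eta_sel. Qed.

Lemma E2_eta x : onT x -> E2 (eta x) = x.
Proof. by case/eta_sel. Qed.

Lemma eta_fiber x u : onT x ->
  eta (frac (x + u)) = frac (eta x + u / 2) \/ eta (frac (x + u)) = flip (frac (eta x + u / 2)).
Proof.
move=> x01; apply: E2_fiber; [exact/eta_onT/frac_onT | exact: frac_onT |].
rewrite E2_eta; last exact: frac_onT.
by rewrite (@E2_frac R) -[in LHS](E2_eta x01) frac_addl; congr frac; lra.
Qed.

Lemma selector_lift x t : onT x -> 0 <= t ->
  (forall u, 0 <= u <= t -> contT eta (frac (x + u))) ->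
  forall u, 0 <= u <= t -> eta (frac (x + u)) = frac (eta x + u / 2).
Proof.
move=> x01 t0 cont.
(* [eta] picks one of the two preimages of [frac (x + u)]; continuity makes the
   choice locally constant in [u]. *)
pose on_lift u := eta (frac (x + u)) == frac (eta x + u / 2).
suff lift_const : forall u, 0 <= u <= t -> on_lift u = on_lift 0.
  move=> u ut; apply/eqP; rewrite -/(on_lift u) lift_const // /on_lift.
  by rewrite addr0 mul0r addr0 (frac_id x01) frac_id ?eqxx //; exact: eta_onT.
apply: segment_locally_constant => // u0 u0t.
have [d d0 near] := cont u0 u0t (4^-1) ltac:(lra).
exists (Num.min d (4^-1)); first by rewrite lt_min d0; lra.
move=> u ut; rewrite lt_min => /andP[ud u4]; symmetry.
apply: fiber_choice_stable; try exact: eta_fiber.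
  apply: le_lt_trans (dT_frac_add _ _ _) _.
  by move: u4; rewrite !ltr_norml => /andP[? ?]; apply/andP; split; lra.
by apply: near; [exact: frac_onT | rewrite (le_lt_trans (dT_frac_add _ _ _)) // distrC].
Qed.

End SelectorLift.

Section ContinuityT.
Variable R : realType.
Implicit Types (f g : R -> R) (x : R).

Lemma contT_near_eq f g x r : onT x -> 0 < r ->
  (forall y, onT y -> dT x y < r -> f y = g y) -> contT g x -> contT f x.
Proof.
move=> x01 r0 fg gx e e0; have [d d0 near] := gx e e0.
exists (Num.min d r) => [|y y01]; first by rewrite lt_min d0.
rewrite lt_min => /andP[? ?]; rewrite !fg ?dTxx //; exact: near.
Qed.

Lemma contT_near_flip f g x r : onT x -> 0 < r ->
  (forall y, onT y -> dT x y < r -> f y = flip (g y)) -> contT g x -> contT f x.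
Proof.
move=> x01 r0 fg gx e e0; have [d d0 near] := gx e e0.
exists (Num.min d r) => [|y y01]; first by rewrite lt_min d0.
rewrite lt_min => /andP[? ?]; rewrite !fg ?dTxx // dT_flip; exact: near.
Qed.

Lemma right_limT_near_eq f g x r L : 0 < r ->
  (forall y, onT y -> dT x y < r -> f y = g y) -> right_limT g x L -> right_limT f x L.
Proof.
move=> r0 fg lim e e0; have [d d0 near] := lim e e0.
exists (Num.min d r) => [|t t0]; first by rewrite lt_min d0.
rewrite lt_min => /andP[? ?]; rewrite fg; [exact: near | exact: frac_onT |].
by rewrite dT_fracr (le_lt_trans (dT_le_norm _ _)) // opprD addNKr normrN gtr0_norm.
Qed.

Lemma left_limT_near_eq f g x r L : 0 < r ->
  (forall y, onT y -> dT x y < r -> f y = g y) -> left_limT g x L -> left_limT f x L.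
Proof.
move=> r0 fg lim e e0; have [d d0 near] := lim e e0.
exists (Num.min d r) => [|t t0]; first by rewrite lt_min d0.
rewrite lt_min => /andP[? ?]; rewrite fg; [exact: near | exact: frac_onT |].
by rewrite dT_fracr (le_lt_trans (dT_le_norm _ _)) // opprB addrC subrK gtr0_norm.
Qed.

Lemma jumpT_near_eq f g x r : onT x -> 0 < r ->
  (forall y, onT y -> dT x y < r -> f y = g y) -> jumpT g x -> jumpT f x.
Proof.
move=> x01 r0 fg [L [Rl [LR01 llim rlim LR gx]]]; exists L, Rl; split => //.
- exact: left_limT_near_eq r0 fg llim.
- exact: right_limT_near_eq r0 fg rlim.
- by rewrite fg ?dTxx.
Qed.

End ContinuityT.

Section MeasurableT.
Variable R : realType.

Definition ballT (x e : R) := [set y | onT y /\ dT x y < e].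

Lemma ballT_openT x e : openT (ballT x e).
Proof.
move=> y y01 [_ xy]; exists (e - dT x y); first lra.
by move=> z z01 yz; split => //; have := dT_triangle x y z; lra.
Qed.

Lemma onT_measurable : measurable (@onT R).
Proof.
suff -> : @onT R = [set` `[0, 1[%R] by exact: measurable_itv.
by apply/seteqP; split => y; rewrite /= in_itv.
Qed.

Lemma openT_itvoo_open (U : set R) : openT U -> open (U `&` `]0, 1[%classic).
Proof.
move=> oU; rewrite openE => x [Ux]; rewrite /= in_itv /= => /andP[x0 x1].
have [e e0 eU] := oU x (ltac:(by apply/andP; split; lra) : onT x) Ux.
apply/nbhs_ballP; exists (Num.min e (Num.min x (1 - x))) => /=.
  by rewrite !lt_min e0 x0 /=; lra.
move=> y; rewrite -ball_normE /ball_ /= !lt_min => /andP[xye /andP[xyx xy1]].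
move: xyx xy1; rewrite !ltr_norml => /andP[? ?] /andP[? ?].
split; last by rewrite /= in_itv /=; apply/andP; split; lra.
by apply: eU; [apply/andP; split; lra | exact: le_lt_trans (dT_le_norm _ _) xye].
Qed.

Lemma openT_measurable (U : set R) : openT U -> measurable (U `&` @onT R).
Proof.
move=> oU.
have -> : U `&` @onT R = (U `&` `]0, 1[%classic) `|` (U `&` [set 0]).
  apply/seteqP; split => y.
    move=> [Uy /andP[y0 y1]]; have [y_eq0|yn0] := eqVneq y 0; first by right.
    by left; split; rewrite //= in_itv /= y1 lt_neqAle eq_sym yn0 y0.
  move=> [[Uy]|[Uy y0]]; last by split; rewrite // y0 /onT lexx ltr01.
  by rewrite /= in_itv /= => /andP[y0 y1]; split; rewrite // /onT (ltW y0) y1.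
apply: measurableU; first exact: open_measurable (openT_itvoo_open oU).
have [U0|nU0] := pselect (U 0).
  suff -> : U `&` [set 0] = [set 0 : R] by exact: measurable_set1.
  by apply/seteqP; split => y; [case | move=> ->].
suff -> : U `&` [set 0] = set0 by exact: measurable0.
by apply/seteqP; split => y // [Uy y0]; apply: nU0; rewrite -y0.
Qed.

Lemma ballT_measurable x e : measurable (ballT x e).
Proof.
have := openT_measurable (@ballT_openT x e).
suff -> : ballT x e `&` @onT R = ballT x e by [].
by apply/seteqP; split => y; [case | move=> [y01 ?]].
Qed.

Lemma closedT_measurable (S : set R) : S `<=` @onT R -> openT (~` S) -> measurable S.
Proof.
move=> S01 oC; suff -> : S = @onT R `\` (~` S `&` @onT R).
  exact: measurableD onT_measurable (openT_measurable oC).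
apply/seteqP; split => y; first by move=> Sy; split; [exact: S01 | case].
by move=> [y01 nCy]; apply: contrapT => nSy; apply: nCy.
Qed.

Lemma negligible_not_suppT (mu : {measure set R -> \bar R}) :
  mu.-negligible [set y | onT y /\ ~ suppT mu y].
Proof.
(* Covered by the countably many null balls with rational centre and radius. *)
pose B (n : nat) : set R :=
  if unpickle n is Some qr then
    if `[< mu (ballT (ratr qr.1) (ratr qr.2)) = 0%E >] then ballT (ratr qr.1) (ratr qr.2)
    else set0
  else set0.
apply: (@negligibleS _ _ _ mu (\bigcup_n B n)); last first.
  apply: negligible_bigcup => n; rewrite /B.
  case: (unpickle n) => [qr|]; last exact: negligible_set0.
  case: ifP => [/asboolP null|_]; last exact: negligible_set0.
  by apply/negligibleP => //; exact: ballT_measurable.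
move=> y [y01 nsupp].
have [e [e0 null]] : exists e : R, 0 < e /\ mu (ballT y e) = 0%E.
  apply: contrapT => pos; apply: nsupp; split => // e e0.
  by rewrite lt0e measure_ge0 andbT; apply/eqP => null; apply: pos; exists e.
have [q] := @rat_in_itvoo R (y - e / 3) (y + e / 3) ltac:(lra).
have [r] := @rat_in_itvoo R (e / 3) (2 * e / 3) ltac:(lra).
rewrite !in_itv /= => /andP[r1 r2] /andP[q1 q2].
have yq : dT y (ratr q) < e / 3.
  by apply: le_lt_trans (dT_le_norm _ _) _; rewrite ltr_norml; apply/andP; split; lra.
have qr_null : mu (ballT (ratr q) (ratr r)) = 0%E.
  apply/eqP; rewrite eq_le measure_ge0 andbT -null.
  apply: le_measure; rewrite ?inE; try exact: ballT_measurable.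
  by move=> z [z01 qz]; split => //; have := dT_triangle y (ratr q) z; lra.
exists (pickle (q, r)); first exact: I.
rewrite /B pickleK /=.
have -> : `[< mu (ballT (ratr q) (ratr r)) = 0%E >] = true by exact/asboolP.
split => //; rewrite dTC.
by apply: le_lt_trans (dT_le_norm _ _) _; rewrite ltr_norml; apply/andP; split; lra.
Qed.

End MeasurableT.

Section ArcsT.
Variable R : realType.
Implicit Types a l y : R.

Definition arcT a l := [set y | onT y /\ frac (y - a) <= l].

Lemma arcT_param a l t : 0 <= t <= l -> l < 1 -> arcT a l (frac (a + t)).
Proof.
move=> /andP[t0 tl] l1; split; first exact: frac_onT.
by rewrite frac_add_subK //; apply/andP; split; lra.
Qed.

Lemma arcT_start a l : onT a -> 0 <= l -> arcT a l a.
Proof. by move=> a01 l0; split; rewrite // subrr frac0. Qed.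

Lemma arcT_decomp a l y : arcT a l y -> y = frac (a + frac (y - a)) /\ 0 <= frac (y - a) <= l.
Proof.
move=> [y01 ya]; split; first by rewrite frac_sub_addK.
by have /andP[-> _] := fracP (y - a).
Qed.

Lemma arcT_compl_near a l y : 0 <= l -> onT y -> ~ arcT a l y ->
  exists2 r : R, 0 < r & forall y', onT y' -> dT y y' < r -> ~ arcT a l y'.
Proof.
move=> l0 y01 nAy; have [|r r0 near] := @near_frac_sub_gt R a l y l0.
  by rewrite ltNge; apply/negP => ya; apply: nAy.
by exists r => // y' _ /near ?; case; lra.
Qed.

Lemma arcT_measurable a l : 0 <= l -> measurable (arcT a l).
Proof.
move=> l0; apply: closedT_measurable => [y []//|y y01 nAy].
by have [r r0 near] := arcT_compl_near l0 y01 nAy; exists r.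
Qed.

Lemma arcT_connected a l : 0 <= l < 1 -> connectedT (arcT a l).
Proof.
move=> /andP[l0 l1] U V oU oV cover disj.
have [|/eqP/set0P[z0 [Az0 Uz0]]] := pselect (arcT a l `&` U = set0); first by left.
right; apply/seteqP; split => // z1 [Az1 Vz1]; exfalso.
pose inU t := `[< U (frac (a + t)) >].
have notUV z : arcT a l z -> V z -> ~ U z.
  by move=> Az Vz Uz; have : (arcT a l `&` U `&` V) z by []; rewrite disj.
have inU_const : forall t, 0 <= t <= l -> inU t = inU 0.
  apply: segment_locally_constant => // t tl.
  have at01 : onT (frac (a + t)) := frac_onT _.
  have near_at (W : set R) : openT W -> W (frac (a + t)) -> exists2 r : R, 0 < r &
      forall t' : R, 0 <= t' <= l -> `|t' - t| < r -> W (frac (a + t')).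
    move=> oW Wt; have [r r0 Wr] := oW _ at01 Wt; exists r => // t' _ tt'.
    by apply: Wr; [exact: frac_onT | rewrite (le_lt_trans (dT_frac_add _ _ _)) // distrC].
  have [Ut|nUt] := pselect (U (frac (a + t))).
    have [r r0 Ur] := near_at U oU Ut; exists r => // t' t'l tt'.
    by apply: asbool_equiv_eq; split => // _; exact: Ur.
  have [|Vt] := cover _ (arcT_param a tl l1); first by [].
  have [r r0 Vr] := near_at V oV Vt; exists r => // t' t'l tt'.
  apply: asbool_equiv_eq; split => // Ut'; exfalso.
  exact: notUV (arcT_param a t'l l1) (Vr _ t'l tt') Ut'.
have [z0E z0l] := arcT_decomp Az0; have [z1E z1l] := arcT_decomp Az1.
have : inU (frac (z0 - a)) by rewrite /inU -z0E; exact/asboolP.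
rewrite inU_const // -(inU_const _ z1l) /inU -z1E => /asboolP.
exact: notUV Az1 Vz1.
Qed.

End ArcsT.

Definition flowerT (R : realType) (eta : R -> R) := closureT [set eta x | x in @onT R].

Section FlowerStructure.
Variables (R : realType) (eta : R -> R) (s : seq R).
Hypothesis eta_sel : preimage_selector eta.
Hypothesis s_uniq : uniq s.
Hypothesis s_size : (2 <= size s)%N.
Hypothesis disc_s : discT eta = [set x | x \in s].
Hypothesis disc_jump : forall x, discT eta x -> jumpT eta x.
Implicit Types x y z : R.

Lemma s_onT x : x \in s -> onT x.
Proof. by move=> xs; have [] : discT eta x by rewrite disc_s. Qed.

Lemma contT_notin_s x : onT x -> x \notin s -> contT eta x.
Proof.
move=> x01 xs; apply: contrapT => ncont.
by have : discT eta x by []; rewrite disc_s /= => xs'; rewrite xs' in xs.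
Qed.

Lemma has_other d : d \in s -> has (predC1 d) s.
Proof.
move=> ds; have : (0 < size (rem d s))%N by rewrite size_rem // -subn1 subn_gt0.
case E: (rem d s) => [//|x r] _; have := mem_head x r.
by rewrite -E mem_rem_uniq // inE => /andP[xd xs]; apply/hasP; exists x.
Qed.

Definition is_next d e := [/\ d \in s, e \in s, e != d &
  forall x, x \in s -> x != d -> frac (e - d) <= frac (x - d)].

Lemma is_next_exists d : d \in s -> exists e, is_next d e.
Proof.
move=> ds; have [e [es ed emin]] := seq_argmin (fun e => frac (e - d)) (has_other ds).
by exists e; split => // x xs xd; exact: emin.
Qed.

Lemma is_next_uniq d e e' : is_next d e -> is_next d e' -> e = e'.
Proof.
move=> [ds es ed emin] [_ es' ed' emin'].
have ee' : frac (e - d) = frac (e' - d).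
  by apply/eqP; rewrite eq_le emin ?emin'.
apply: frac_sub_eq0; [exact: s_onT | exact: s_onT |].
by have := fracP (e - e'); have := frac_chasles d e' e; rewrite ee' => -[] ? /andP[? ?]; lra.
Qed.

Definition next d : R :=
  if pselect (exists e, is_next d e) is left nxt then projT1 (cid nxt) else d.

Lemma nextP d : d \in s -> is_next d (next d).
Proof.
rewrite /next => ds; case: pselect => [nxt|]; first by case: (cid nxt).
by move: (is_next_exists ds).
Qed.

Lemma next_in d : d \in s -> next d \in s.
Proof. by case/nextP. Qed.

Lemma next_neq d : d \in s -> next d != d.
Proof. by case/nextP. Qed.

Definition gap d := frac (next d - d).

Lemma gap_gt0 d : d \in s -> 0 < gap d.
Proof.
move=> ds; apply: frac_sub_gt0; [exact/s_onT/next_in | exact: s_onT |].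
exact/eqP/next_neq.
Qed.

Lemma gap_lt1 d : gap d < 1.
Proof. by case/andP: (fracP (next d - d)). Qed.

Lemma gap_ge0 d : 0 <= gap d.
Proof. by case/andP: (fracP (next d - d)). Qed.

Lemma gap_no_disc d x : d \in s -> x \in s -> 0 < frac (x - d) -> gap d <= frac (x - d).
Proof.
move=> ds xs xd; have [_ _ _ nmin] := nextP ds; apply: nmin => //.
by apply: contraTneq xd => ->; rewrite subrr frac0 ltxx.
Qed.

Definition gap_arc d := [set y | onT y /\ 0 < frac (y - d) < gap d].

Lemma gap_arc_param d t : 0 < t < gap d -> gap_arc d (frac (d + t)).
Proof.
move=> /andP[t0 td]; have := gap_lt1 d; split; first exact: frac_onT.
by rewrite frac_add_subK; [apply/andP | apply/andP; split]; lra.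
Qed.

Lemma gap_arc_contT d y : d \in s -> gap_arc d y -> contT eta y.
Proof.
move=> ds [y01 /andP[yd0 yd]]; apply: contT_notin_s => //.
by apply/negP => ys; have := gap_no_disc ds ys yd0; lra.
Qed.

Lemma next_surj x : x \in s -> exists2 p, p \in s & next p = x.
Proof.
move=> xs; have [p [ps px pmax]] := seq_argmin (fun p => frac (x - p)) (has_other xs).
exists p => //; apply: (is_next_uniq (nextP ps)); split => //; first by rewrite eq_sym.
move=> z zs zp; rewrite leNgt; apply/negP => zx.
have zx' : z != x by apply: contraTneq zx => ->; rewrite ltxx.
have := pmax _ zs zx'; have := frac_chasles p z x.
have := frac_sub_gt0 (s_onT zs) (s_onT ps) (elimN eqP zp).
by have /andP[? ?] := fracP (x - z); move=> ? [] /=; lra.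
Qed.

Lemma gap_arc_cover y : onT y -> y \notin s -> exists2 d, d \in s & gap_arc d y.
Proof.
move=> y01 ys; have s0 : has predT s by case: s s_size.
have [p [ps _ pmax]] := seq_argmin (fun p => frac (y - p)) s0.
exists p => //; split => //; apply/andP; split.
  by apply: frac_sub_gt0 (s_onT ps) _ => // yp; rewrite yp ps in ys.
rewrite ltNge; apply/negP => gy.
have := pmax _ (next_in ps) isT; have := frac_chasles p (next p) y.
have := gap_gt0 ps; have /andP[? ?] := fracP (y - next p).
by rewrite /gap in gy *; move=> ? [] ?; lra.
Qed.

Lemma gaps_disjoint d e y : d \in s -> e \in s -> d != e ->
  0 < frac (y - d) <= gap d -> 0 < frac (y - e) <= gap e -> False.
Proof.
wlog le_de : d e / frac (y - d) <= frac (y - e).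
  move=> gen ds es de yd ye; have [le|lt] := leP (frac (y - d)) (frac (y - e)).
    exact: (gen d e).
  by apply: (gen e d) => //; [exact: ltW | rewrite eq_sym].
move=> ds es de /andP[yd0 yd] /andP[ye0 ye].
have de0 := frac_sub_gt0 (s_onT ds) (s_onT es) (elimN eqP de).
have := gap_no_disc es ds de0; have /andP[_ ?] := fracP (d - e).
by case: (frac_chasles e d y) => ?; lra.
Qed.

Lemma gap_arc_disj d e y : d \in s -> e \in s -> d != e -> gap_arc d y -> gap_arc e y -> False.
Proof.
move=> ds es de [_ /andP[yd0 yd]] [_ /andP[ye0 ye]].
by apply: (gaps_disjoint (y := y) ds es de); [rewrite yd0 (ltW yd) | rewrite ye0 (ltW ye)].
Qed.

Lemma next_inj d e : d \in s -> e \in s -> next d = next e -> d = e.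
Proof.
move=> ds es de; apply/eqP/negPn/negP => nde.
apply: (gaps_disjoint (y := next d) ds es nde).
  by apply/andP; split; [exact: gap_gt0 | exact: lexx].
by rewrite de; apply/andP; split; [exact: gap_gt0 | exact: lexx].
Qed.

Lemma eta_gap_lift d t1 t2 : d \in s -> 0 < t1 -> t1 <= t2 -> t2 < gap d ->
  eta (frac (d + t2)) = frac (eta (frac (d + t1)) + (t2 - t1) / 2).
Proof.
move=> ds t10 t12 t2d.
have -> : frac (d + t2) = frac (frac (d + t1) + (t2 - t1)) by rewrite frac_addl; congr frac; lra.
apply: (selector_lift eta_sel (t := t2 - t1)) => //;
  [exact: frac_onT | lra | | by apply/andP; split; lra].
move=> u /andP[u0 ut]; rewrite frac_addl -addrA; apply: (gap_arc_contT ds).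
by apply: gap_arc_param; apply/andP; split; lra.
Qed.

(* The start of the arc onto which [eta] maps the gap after [d] at half speed,
   extrapolated from the midpoint of the gap, where [eta] is continuous. *)
Definition petal_start d := frac (eta (frac (d + gap d / 2)) - gap d / 4).

Definition petal_end d := frac (petal_start d + gap d / 2).

Lemma petal_start_onT d : onT (petal_start d).
Proof. exact: frac_onT. Qed.

Lemma dT_petal_start_near x t : 0 <= t ->
  dT (petal_start x) (frac (petal_start x + t / 2)) <= t / 2.
Proof.
move=> t0; rewrite -{1}(frac_id (petal_start_onT x)) -{1}[petal_start x]addr0.
by apply: le_trans (dT_frac_add _ _ _) _; rewrite sub0r normrN ger0_norm //; lra.
Qed.

Lemma dT_petal_end_near p t : 0 <= t ->
  dT (petal_end p) (frac (petal_start p + (gap p - t) / 2)) <= t / 2.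
Proof.
move=> t0; apply: le_trans (dT_frac_add _ _ _) _.
by rewrite (_ : gap p / 2 - (gap p - t) / 2 = t / 2) ?ger0_norm //; lra.
Qed.

Lemma eta_on_gap d t : d \in s -> 0 < t < gap d ->
  eta (frac (d + t)) = frac (petal_start d + t / 2).
Proof.
move=> ds /andP[t0 td]; have g0 := gap_gt0 ds.
have [mt|tm] := leP (gap d / 2) t.
  rewrite (eta_gap_lift ds _ mt td) ?divr_gt0 // /petal_start frac_addl.
  by congr frac; lra.
have := eta_gap_lift ds t0 (ltW tm) (ltac:(lra) : gap d / 2 < gap d).
rewrite /petal_start => ->; rewrite frac_addl -addrA frac_addl.
by rewrite -{1}(frac_id (eta_onT eta_sel (frac_onT (d + t)))); congr frac; lra.
Qed.

Lemma petal_start_double d : d \in s -> exists n : int, 2 * petal_start d = d + n%:~R.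
Proof.
move=> ds; have g0 := gap_gt0 ds; have g1 := gap_lt1 d.
have := E2_eta eta_sel (frac_onT (d + gap d / 2)).
rewrite eta_on_gap //; last by apply/andP; split; lra.
rewrite (@E2_frac R) => /frac_eqz [n dn].
by exists n; lra.
Qed.

Lemma E2_petal_start d : d \in s -> E2 (petal_start d) = d.
Proof.
move=> ds; have [n dn] := petal_start_double ds; rewrite /E2 dn.
by apply: (frac_def (n := n)) => //; exact: s_onT.
Qed.

Lemma E2_petal_end d : d \in s -> E2 (petal_end d) = next d.
Proof.
move=> ds; have [n dn] := petal_start_double ds; have [m nm] := frac_decomp (next d - d).
rewrite /petal_end (@E2_frac R); apply: (frac_def (n := n - m)); last exact/s_onT/next_in.
by rewrite intrB; rewrite /gap in nm *; lra.
Qed.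

Lemma right_lim_petal_start d L : d \in s -> onT L -> right_limT eta d L -> L = petal_start d.
Proof.
move=> ds L01 lim; apply: dT_small_eq => //; first exact: petal_start_onT.
move=> e e0; have [r r0 near] := lim (e / 2) ltac:(lra).
have [t [t0 tr td te]] := exists_pos_below r0 (gap_gt0 ds) e0.
have := near t t0 tr; rewrite eta_on_gap //; last by apply/andP; split.
have := dT_petal_start_near d (ltW t0); rewrite dTC.
have := dT_triangle L (frac (petal_start d + t / 2)) (petal_start d).
by rewrite (dTC (frac _) L); lra.
Qed.

Lemma left_lim_petal_end d L : d \in s -> onT L -> left_limT eta (next d) L -> L = petal_end d.
Proof.
move=> ds L01 lim; apply: dT_small_eq => //; first exact: frac_onT.
move=> e e0; have [r r0 near] := lim (e / 2) ltac:(lra).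
have [t [t0 tr td te]] := exists_pos_below r0 (gap_gt0 ds) e0.
have shift : frac (next d - t) = frac (d + (gap d - t)).
  have [m nm] := frac_decomp (next d - d).
  by apply: (frac_congrz (n := m)); rewrite /gap in nm *; lra.
have := near t t0 tr; rewrite shift eta_on_gap //; last by apply/andP; split; lra.
have := dT_petal_end_near d (ltW t0); rewrite dTC.
have := dT_triangle L (frac (petal_start d + (gap d - t) / 2)) (petal_end d).
by rewrite (dTC (frac _) L); lra.
Qed.

(* The one-sided limits at a jump are the two preimages of [x], hence antipodal. *)
Lemma jump_at_disc x : x \in s -> exists p, [/\ p \in s, next p = x,
  eta x = petal_start x \/ eta x = petal_end p, petal_end p <> petal_start x &
  petal_start x = flip (petal_end p)].
Proof.
move=> xs; have [L [Rl [[L01 Rl01] llim rlim LRl etax]]] : jumpT eta x.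
  by apply: disc_jump; rewrite disc_s.
have [p ps px] := next_surj xs; exists p; rewrite -px in llim.
have eL := left_lim_petal_end ps L01 llim; have eR := right_lim_petal_start xs Rl01 rlim.
subst L Rl; split => //; first by case: etax; [right | left].
have E2_eq : E2 (petal_start x) = E2 (petal_end p) by rewrite E2_petal_start // E2_petal_end ?px.
by case: (E2_fiber (petal_start_onT x) (frac_onT _) E2_eq) => // /esym.
Qed.

Definition petal_arc d := arcT (petal_start d) (gap d / 2).

Lemma petal_arc_param d t : 0 <= t <= gap d -> petal_arc d (frac (petal_start d + t / 2)).
Proof.
move=> /andP[? ?]; have ? := gap_lt1 d.
by apply: arcT_param; [apply/andP; split |]; lra.
Qed.

Lemma petal_start_in d : petal_arc d (petal_start d).
Proof. by apply: arcT_start; [exact: petal_start_onT | have := gap_ge0 d; lra]. Qed.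

Lemma petal_end_in d : petal_arc d (petal_end d).
Proof. by apply: petal_arc_param; rewrite gap_ge0 lexx. Qed.

Lemma eta_gap_in_petal d t : d \in s -> 0 < t < gap d -> petal_arc d (eta (frac (d + t))).
Proof.
move=> ds /andP[? ?]; rewrite eta_on_gap //; last by apply/andP.
by apply: petal_arc_param; apply/andP; split; lra.
Qed.

Lemma eta_in_petal x : onT x -> exists2 d, d \in s & petal_arc d (eta x).
Proof.
move=> x01; have [xs|xs] := boolP (x \in s).
  have [p [ps _ [->|->] _ _]] := jump_at_disc xs.
    by exists x => //; exact: petal_start_in.
  by exists p => //; exact: petal_end_in.
have [d ds [_ /andP[? ?]]] := gap_arc_cover x01 xs.
exists d => //; rewrite -(frac_sub_addK d x01).
by apply: eta_gap_in_petal => //; apply/andP.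
Qed.

Lemma petal_arc_sub_flower d : d \in s -> petal_arc d `<=` flowerT eta.
Proof.
move=> ds z Az; have [z01 _] := Az; split => // e e0.
have [zE /andP[u0 ug]] := arcT_decomp Az.
set u := frac (z - petal_start d) in zE u0 ug.
have g0 := gap_gt0 ds; have g1 := gap_lt1 d.
have [h [h0 he hg _]] := exists_pos_below e0 (ltac:(lra) : 0 < gap d / 2) ltr01.
have [t /andP[t0 tg] ut] : exists2 t, 0 < t < gap d & `|u - t / 2| < e.
  have [u4|u4] := ltP u (gap d / 4); [exists (2 * u + h) | exists (2 * u - h)];
    rewrite ?ltr_norml; apply/andP; split; lra.
exists (eta (frac (d + t))); first by exists (frac (d + t)) => //; exact: frac_onT.
rewrite eta_on_gap //; last by apply/andP.
by rewrite zE; exact: le_lt_trans (dT_frac_add _ _ _) ut.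
Qed.

Lemma flower_sub_petal_arcs z : flowerT eta z -> exists2 d, d \in s & petal_arc d z.
Proof.
move=> [z01 cl]; apply: contrapT => nA.
have [|r r0 near] := @near_all_seq R _ z s (fun d y => ~ petal_arc d y).
  move=> d ds; apply: arcT_compl_near z01 _; first by have := gap_ge0 d; lra.
  by move=> Adz; apply: nA; exists d.
have [_ [x x01 <-] zx] := cl r r0.
have [d ds Adx] := eta_in_petal x01.
exact: near _ (eta_onT eta_sel x01) zx d ds Adx.
Qed.

Lemma petal_interior_eta d z : d \in s -> onT z ->
  0 < frac (z - petal_start d) < gap d / 2 -> exists2 y, gap_arc d y & eta y = z.
Proof.
move=> ds z01 /andP[u0 ug]; have := gap_lt1 d.
exists (frac (d + 2 * frac (z - petal_start d))).
  by apply: gap_arc_param; apply/andP; split; lra.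
rewrite eta_on_gap //; last by apply/andP; split; lra.
by rewrite (_ : 2 * _ / 2 = frac (z - petal_start d)) ?frac_sub_addK //; lra.
Qed.

Lemma petal_interiors_disj d e z : d \in s -> e \in s -> d != e -> onT z ->
  0 < frac (z - petal_start d) < gap d / 2 ->
  0 < frac (z - petal_start e) < gap e / 2 -> False.
Proof.
move=> ds es de z01 zd ze.
have [y1 y1d y1z] := petal_interior_eta ds z01 zd.
have [y2 y2e y2z] := petal_interior_eta es z01 ze.
have y12 : y1 = y2 by rewrite -(E2_eta eta_sel y1d.1) -(E2_eta eta_sel y2e.1) y1z y2z.
by apply: gap_arc_disj ds es de y1d _; rewrite y12.
Qed.

Lemma petal_start_neq_end d e : d \in s -> e \in s -> petal_start d <> petal_end e.
Proof.
move=> ds es de_eq.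
have de : d = next e by rewrite -(E2_petal_start ds) -(E2_petal_end es) de_eq.
have [p [ps pd _ pneq _]] := jump_at_disc ds.
by apply: pneq; rewrite (@next_inj p e) // -de.
Qed.

Lemma petal_arc_disj d e z : d \in s -> e \in s -> d != e ->
  petal_arc d z -> petal_arc e z -> False.
Proof.
move=> ds es de Adz Aez; have [z01 _] := Adz.
have [_ ud] := arcT_decomp Adz; have [_ ue] := arcT_decomp Aez.
have gd : 0 < gap d / 2 by have := gap_gt0 ds; lra.
have ge : 0 < gap e / 2 by have := gap_gt0 es; lra.
have start f : f \in s -> frac (z - petal_start f) = 0 -> z = petal_start f.
  by move=> fs /frac_sub_eq0; apply => //; exact: petal_start_onT.
have end_ f : frac (z - petal_start f) = gap f / 2 -> z = petal_end f.
  by move=> zf; rewrite /petal_end -zf frac_sub_addK.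
have [[t [zdt zet]]|[/(start _ ds) zsd /end_ zee]|[/end_ zed /(start _ es) zse]] :=
  common_shift gd ge ud ue.
- have /andP[? ?] := zdt; have /andP[? ?] := zet.
  apply: (@petal_interiors_disj d e (frac (z + t))) => //; first exact: frac_onT.
    by rewrite frac_sub_shift; [exact: zdt | apply/andP; split; have := gap_lt1 d; lra].
  by rewrite frac_sub_shift; [exact: zet | apply/andP; split; have := gap_lt1 e; lra].
- by apply: (petal_start_neq_end ds es); rewrite -zsd.
- by apply: (petal_start_neq_end es ds); rewrite -zse.
Qed.

Lemma near_only_petal d z : onT z -> (forall e, e \in s -> e != d -> ~ petal_arc e z) ->
  exists2 r : R, 0 < r & forall y, onT y -> dT z y < r ->
    forall e, e \in s -> e != d -> ~ petal_arc e y.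
Proof.
move=> z01 nA; apply: near_all_seq => e es.
have [->|ed] := eqVneq e d; first by exists 1 => // *; rewrite eqxx in *.
have [|r r0 near] := arcT_compl_near _ z01 (nA e es ed); first by have := gap_ge0 e; lra.
by exists r => // y y01 zy _; exact: near.
Qed.

Lemma petal_eq_petal_arc P : petal (flowerT eta) P -> exists2 d, d \in s & P = petal_arc d.
Proof.
move=> [PF [z Pz] P_conn P_max]; have [d ds Adz] := flower_sub_petal_arcs (PF _ Pz).
exists d => //.
pose U := [set y | forall e, e \in s -> e != d -> ~ petal_arc e y].
have U_open : openT U.
  by move=> y y01 Uy; have [r r0 near] := near_only_petal y01 Uy; exists r.
have V_open : openT (~` petal_arc d).
  move=> y y01 nAy; have [|r r0 near] := arcT_compl_near _ y01 nAy; last by exists r.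
  by have := gap_ge0 d; lra.
have only_d y : petal_arc d y -> U y.
  by move=> Ady e es ed Aey; exact: petal_arc_disj es ds ed Aey Ady.
have cover : P `<=` U `|` ~` petal_arc d.
  by move=> y Py; have [Ady|nAy] := pselect (petal_arc d y); [left; exact: only_d | right].
have disj : P `&` U `&` ~` petal_arc d = set0.
  apply/seteqP; split => // y [[Py Uy] nAy].
  have [e es Aey] := flower_sub_petal_arcs (PF _ Py).
  by have [ed|ed] := eqVneq e d; [apply: nAy; rewrite -ed | exact: Uy es ed Aey].
have PA : P `<=` petal_arc d.
  have [PU|PV] := P_conn U _ U_open V_open cover disj.
    have : (P `&` U) z by split => //; exact: only_d.
    by rewrite PU.
  move=> y Py; apply: contrapT => nAy.
  by have : (P `&` ~` petal_arc d) y by []; rewrite PV.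
symmetry; apply: P_max => //; last exact: petal_arc_sub_flower.
by apply: arcT_connected; have := gap_ge0 d; have := gap_lt1 d => ? ?; apply/andP; split; lra.
Qed.

Lemma near_disc x p : x \in s -> p \in s -> next p = x ->
  exists2 r : R, 0 < r & forall y, onT y -> dT x y < r -> [\/ y = x,
    y = frac (x + dT x y) /\ 0 < dT x y < gap x |
    y = frac (p + (gap p - dT x y)) /\ 0 < dT x y < gap p].
Proof.
move=> xs ps px; exists (Num.min (gap x) (gap p)); first by rewrite lt_min !gap_gt0.
move=> y y01; rewrite lt_min => /andP[xy_x xy_p].
have [xy0|xy0] := eqVneq (dT x y) 0.
  by constructor 1; apply/esym/dT_eq0 => //; exact: s_onT.
have xy_gt0 : 0 < dT x y by rewrite lt_neqAle eq_sym xy0 dT_ge0.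
case: (dT_cases x y01) => yE; first by constructor 2; split => //; apply/andP.
constructor 3; split; last by apply/andP.
move: yE; set t := dT x y => ->; apply: (frac_congrz (n := Num.floor (next p - p))).
by rewrite /gap /frac -px; lra.
Qed.

Lemma contT_at_disc f x p : x \in s -> p \in s -> next p = x ->
  (forall t, 0 < t < gap x -> dT (f x) (f (frac (x + t))) <= t / 2) ->
  (forall t, 0 < t < gap p -> dT (f x) (f (frac (p + (gap p - t)))) <= t / 2) ->
  contT f x.
Proof.
move=> xs ps px right left e e0; have [r r0 near] := near_disc xs ps px.
exists (Num.min r (2 * e)) => [|y y01]; first by rewrite lt_min r0; lra.
rewrite lt_min => /andP[xy_r xy_e].
case: (near y y01 xy_r) => [->|[yE xy]|[yE xy]]; first by rewrite dTxx.
  by rewrite yE; apply: le_lt_trans (right _ xy) _; lra.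
by rewrite yE; apply: le_lt_trans (left _ xy) _; lra.
Qed.

Lemma petal_arc_measurable d : measurable (petal_arc d).
Proof. by apply: arcT_measurable; have := gap_ge0 d; lra. Qed.

Lemma petal_arc_not_supp (mu : {measure set R -> \bar R}) d z : d \in s ->
  suppT mu `<=` flowerT eta -> mu (petal_arc d) = 0%E -> petal_arc d z -> ~ suppT mu z.
Proof.
move=> ds supp_sub null Adz [z01 pos].
have [r r0 near] := near_only_petal z01 (fun e es ed Aez => petal_arc_disj es ds ed Aez Adz).
have : ballT z r `<=` petal_arc d `|` [set y | onT y /\ ~ suppT mu y].
  move=> y [y01 zy]; have [Ady|nAdy] := pselect (petal_arc d y); [by left | right].
  split => // /supp_sub /flower_sub_petal_arcs [e es Aey].
  by have [ed|ed] := eqVneq e d; [apply: nAdy; rewrite -ed | exact: near y y01 zy e es ed Aey].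
move=> /(@negligibleS _ _ _ mu) ball_null.
have : mu.-negligible (ballT z r).
  apply: ball_null; apply: negligibleU (negligible_not_suppT mu).
  by apply/negligibleP => //; exact: petal_arc_measurable.
move/negligibleP => /(_ (ballT_measurable z r)) ball0.
by have := pos r r0; rewrite -/(ballT z r) ball0 ltxx.
Qed.

Section FlipPetal.
Variable d : R.
Hypothesis ds : d \in s.

Definition eta_flip x := if `[< petal_arc d (eta x) >] then flip (eta x) else eta x.

Lemma eta_flip_selector : preimage_selector eta_flip.
Proof.
move=> x x01; rewrite /eta_flip; case: ifP => _; last exact: eta_sel.
by split; [exact: flip_onT | rewrite E2_flip E2_eta].
Qed.

Lemma eta_flip_in y : petal_arc d (eta y) -> eta_flip y = flip (eta y).
Proof. by move=> Ady; rewrite /eta_flip asboolT. Qed.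

Lemma eta_flip_other e y : e \in s -> e != d -> petal_arc e (eta y) -> eta_flip y = eta y.
Proof.
move=> es ed Aey; rewrite /eta_flip asboolF // => Ady.
exact: petal_arc_disj es ds ed Aey Ady.
Qed.

Lemma eta_flip_out y : ~ petal_arc d (eta y) -> eta_flip y = eta y.
Proof. by move=> nAdy; rewrite /eta_flip asboolF. Qed.

Lemma eta_flip_cont_notin_s x : onT x -> x \notin s -> contT eta_flip x.
Proof.
move=> x01 xs; have [e es [_ xe]] := gap_arc_cover x01 xs.
have [r r0 near] := near_frac_sub_in (ltW (gap_lt1 e)) xe.
have in_petal y : onT y -> dT x y < r -> petal_arc e (eta y).
  move=> y01 /near /andP[? ?]; rewrite -(frac_sub_addK e y01).
  by apply: eta_gap_in_petal => //; apply/andP.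
have cx := contT_notin_s x01 xs.
have [ed|ed] := eqVneq e d.
  by apply: (contT_near_flip x01 r0) cx => y y01 xy; rewrite eta_flip_in // -ed; exact: in_petal.
by apply: (contT_near_eq x01 r0) cx => y y01 xy; exact: eta_flip_other es ed (in_petal _ y01 xy).
Qed.

Lemma eta_flip_near_eq x : x \in s -> x != d -> x != next d ->
  exists2 r : R, 0 < r & forall y, onT y -> dT x y < r -> eta_flip y = eta y.
Proof.
move=> xs xd xnd; have [p [ps px etax _ _]] := jump_at_disc xs.
have pd : p != d by apply: contra_neq xnd => <-; rewrite px.
have [r r0 near] := near_disc xs ps px; exists r => // y y01 xy.
case: (near y y01 xy) => [->|[yE /andP[? ?]]|[yE /andP[? ?]]].
- case: etax => etax; [apply: eta_flip_other xs xd _ | apply: eta_flip_other ps pd _];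
    rewrite etax; [exact: petal_start_in | exact: petal_end_in].
- by rewrite yE; apply: eta_flip_other xs xd (eta_gap_in_petal xs _); apply/andP.
- rewrite yE; apply: eta_flip_other ps pd (eta_gap_in_petal ps _).
  by apply/andP; split; lra.
Qed.

Lemma eta_flip_cont_d : contT eta_flip d.
Proof.
have [p [ps pd etad _ start_flip]] := jump_at_disc ds.
have p_neq_d : p != d by apply: contra_neq (next_neq ps) => pd'; rewrite pd pd'.
have end_flip : petal_end p = flip (petal_start d).
  by rewrite start_flip flipK //; exact: frac_onT.
have value : eta_flip d = petal_end p.
  case: etad => etad; last by rewrite (eta_flip_other ps p_neq_d) etad //; exact: petal_end_in.
  by rewrite eta_flip_in etad ?end_flip //; exact: petal_start_in.
apply: (contT_at_disc ds ps pd) => [t|t] /andP[t0 tg]; rewrite value.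
  have td : 0 < t < gap d by apply/andP.
  rewrite (eta_flip_in (eta_gap_in_petal ds td)) (eta_on_gap ds td) end_flip dT_flip.
  by apply: dT_petal_start_near; lra.
have tp : 0 < gap p - t < gap p by apply/andP; split; lra.
rewrite (eta_flip_other ps p_neq_d (eta_gap_in_petal ps tp)) (eta_on_gap ps tp).
by apply: dT_petal_end_near; lra.
Qed.

Lemma eta_flip_cont_next : contT eta_flip (next d).
Proof.
have nds := next_in ds; have ndd := next_neq ds.
have [p [ps pnd etand _ start_flip]] := jump_at_disc nds.
have pd : p = d by exact: next_inj.
subst p.
have value : eta_flip (next d) = petal_start (next d).
  case: etand => etand; last by rewrite eta_flip_in etand -?start_flip //; exact: petal_end_in.
  by rewrite (eta_flip_other nds ndd) etand //; exact: petal_start_in.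
apply: (contT_at_disc nds ds pnd) => [t|t] /andP[t0 tg]; rewrite value.
  have tnd : 0 < t < gap (next d) by apply/andP.
  rewrite (eta_flip_other nds ndd (eta_gap_in_petal nds tnd)) (eta_on_gap nds tnd).
  by apply: dT_petal_start_near; lra.
have td : 0 < gap d - t < gap d by apply/andP; split; lra.
rewrite (eta_flip_in (eta_gap_in_petal ds td)) (eta_on_gap ds td) start_flip dT_flip.
by apply: dT_petal_end_near; lra.
Qed.

Definition s_flip := rem (next d) (rem d s).

Lemma mem_s_flip x : (x \in s_flip) = [&& x != next d, x != d & x \in s].
Proof. by rewrite /s_flip mem_rem_uniq ?rem_uniq // inE mem_rem_uniq // inE. Qed.

Lemma size_s_flip : size s_flip = (size s - 2)%N.
Proof.
have nds : next d \in rem d s by rewrite mem_rem_uniq // inE next_neq ?next_in.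
by rewrite /s_flip size_rem // size_rem // -!subn1 -subnDA.
Qed.

Lemma discT_eta_flip : discT eta_flip = [set x | x \in s_flip].
Proof.
apply/seteqP; split => x /=.
  move=> [x01 ncont]; rewrite mem_s_flip; apply/and3P; split.
  - by apply: contra_notN ncont => /eqP ->; exact: eta_flip_cont_next.
  - by apply: contra_notN ncont => /eqP ->; exact: eta_flip_cont_d.
  - by apply: contrapT => /negP xs; exact: ncont (eta_flip_cont_notin_s x01 xs).
rewrite mem_s_flip => /and3P[xnd xd xs]; have x01 := s_onT xs; split => // cont.
have [r r0 near] := eta_flip_near_eq xs xd xnd.
have [_ ncont] : discT eta x by rewrite disc_s.
by apply: ncont; apply: (contT_near_eq x01 r0) cont => y y01 xy; rewrite near.
Qed.

Lemma eta_flip_selector_with : selector_with (size s - 2) eta_flip.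
Proof.
split; first exact: eta_flip_selector.
  by exists s_flip; split; [exact/rem_uniq/rem_uniq | exact: size_s_flip | exact: discT_eta_flip].
rewrite discT_eta_flip => x /=; rewrite mem_s_flip => /and3P[xnd xd xs].
have [r r0 near] := eta_flip_near_eq xs xd xnd.
by apply: jumpT_near_eq (s_onT xs) r0 near _; apply: disc_jump; rewrite disc_s.
Qed.

Lemma flowerT_sub_flip z : flowerT eta z -> ~ petal_arc d z -> flowerT eta_flip z.
Proof.
move=> [z01 cl] nAdz; split => // e e0.
have [|r r0 near] := arcT_compl_near _ z01 nAdz; first by have := gap_ge0 d; lra.
have [t [t0 te tr _]] := exists_pos_below e0 r0 ltr01.
have [_ [x x01 <-] zx] := cl t t0.
exists (eta_flip x); first by exists x.
rewrite eta_flip_out; first lra.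
by apply: near; [exact: eta_onT | lra].
Qed.

Lemma petal_start_notin_flowerT_flip : ~ flowerT eta_flip (petal_start d).
Proof.
move=> [c01 cl].
have [r r0 near] := near_only_petal c01
  (fun e es ed Aec => petal_arc_disj es ds ed Aec (petal_start_in d)).
have g0 : 0 <= gap d / 2 by have := gap_ge0 d; lra.
have far_flip : gap d / 2 < frac (petal_start d - flip (petal_start d)).
  by rewrite /flip frac_subr opprD addrA subrr add0r fracNhalf; have := gap_lt1 d; lra.
have [r' r'0 far] := near_frac_sub_gt g0 far_flip.
have [t [t0 tr tr' _]] := exists_pos_below r0 r'0 ltr01.
have [_ [x x01 <-] cx] := cl t t0.
have [Adx|nAdx] := pselect (petal_arc d (eta x)).
  move: (far _ (ltac:(lra) : dT (petal_start d) (eta_flip x) < r')).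
  rewrite eta_flip_in // /flip frac_subr frac_subl opprD addrACA subrr addr0.
  by case: Adx => _; lra.
have [e es Aex] := eta_in_petal x01.
have [ed|ed] := eqVneq e d; first by apply: nAdx; rewrite -ed.
by rewrite eta_flip_out // in cx; exact: near _ (eta_onT eta_sel x01) ltac:(lra) e es ed Aex.
Qed.

End FlipPetal.

End FlowerStructure.

Unset Implicit Arguments.

Theorem lemma4 (R : realType) (mu : probability R R) (p : nat) (F P : set R) :
  (mu [set x | onT x] = 1)%E ->
  (forall A : set R, measurable A -> mu ((@E2 R) @^-1` A) = mu A) ->
  (3 <= p)%N ->
  flower p F ->
  suppT mu `<=` F ->
  petal F P ->
  mu P = 0%E ->
  exists Ft : set R, [/\ flower (p - 2) Ft, suppT mu `<=` Ft & ~ (P `<=` Ft)].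
Proof.
move=> _ _ p3 [eta [[eta_sel [s [s_uniq s_size disc_s]] disc_jump] ->]] supp_sub petP null.
have s2 : (2 <= size s)%N by rewrite s_size; lia.
have [d ds PE] := petal_eq_petal_arc eta_sel s_uniq s2 disc_s disc_jump petP.
have null_arc : mu (petal_arc eta s d) = 0%E by rewrite -PE.
exists (flowerT (eta_flip eta s d)); split.
- exists (eta_flip eta s d); split => //; rewrite -s_size.
  exact: eta_flip_selector_with.
- move=> z supp_z; apply: flowerT_sub_flip => //; first exact: supp_sub.
  move=> Adz; exact: (petal_arc_not_supp eta_sel s_uniq s2 disc_s disc_jump ds
    supp_sub null_arc Adz).
- move=> PF; apply: (petal_start_notin_flowerT_flip eta_sel s_uniq s2 disc_s disc_jump ds).
  by apply: PF; rewrite PE; exact: petal_start_in.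
Qed.
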